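(* Let $R$ be a commutative multiplicative hyperring with identity, let $\alpha$ be a good endomorphism of $R$, and let $I$ be an $\alpha$-prime hyperideal of $R$. Then the prime radical $\sqrt{I}$ is an $\alpha$-prime hyperideal of $R$.
   Context: A multiplicative hyperring is an abelian group $(R,+)$ with a hyperoperation $\circ:R\times R\to \mathcal P^*(R)$ (nonempty subsets) such that $a\circ(b\circ c)=(a\circ b)\circ c$, $a\circ(b+c)\subseteq a\circ b+a\circ c$, $(b+c)\circ a\subseteq b\circ a+c\circ a$, and $a\circ(-b)=(-a)\circ b=-(a\circ b)$. Products of subsets are unions of elementwise products. Commutative means $a\circ b=b\circ a$. An identity $1$ satisfies $a\in1\circ a$ for all $a$. A hyperideal is a nonempty $I\subseteq R$ closed under subtraction with $r\circ x\subseteq I$ for $r\in R$, $x\in I$. Standing assumption: every hyperideal is a $\mathbf C$-hyperideal, i.e. for every finite product $A=r_1\circ\cdots\circ r_n$, $A\cap I\neq\emptyset$ implies $A\subseteq I$. A prime hyperideal is a proper hyperideal $P$ with $x\circ y\subseteq P\Rightarrow x\in P$ or $y\in P$. The prime radical $\sqrt I$ is the intersection of all prime hyperideals containing $I$, and equals $R$ if there are none. For $\mathbf C$-hyperideals, $\sqrt I=\{r: r^n\subseteq I \text{ for some } n\in\mathbb N\}$, where $r^n=r\circ\cdots\circ r$ ($n$ factors). A good endomorphism $\alpha$ satisfies $\alpha(x+y)=\alpha(x)+\alpha(y)$ and $\alpha(x\circ y)=\alpha(x)\circ\alpha(y)$. A hyperideal $I$ is $\alpha$-prime if for all $x,y$,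 $x\circ y\subseteq I$ implies $x\in I$ or $\alpha(y)\in I$. *)

From mathcomp Require Import all_boot all_algebra.
Set Implicit Arguments. Unset Strict Implicit. Unset Printing Implicit Defensive.
Import GRing.Theory.
Local Open Scope ring_scope.

Section Hyper.
Variable R : zmodType.
Definition hset := R -> Prop.
Variable mul : R -> R -> hset.

Definition hsingle (a : R) : hset := fun z => z = a.
Definition hsubset (A B : hset) : Prop := forall z, A z -> B z.
Definition hseteq (A B : hset) : Prop := forall z, A z <-> B z.
Definition hsetmul (A B : hset) : hset :=
  fun z => exists a b, A a /\ B b /\ mul a b z.
Definition hsetadd (A B : hset) : hset :=
  fun z => exists a b, A a /\ B b /\ z = a + b.
Definition hsetopp (A : hset) : hset := fun z => A (- z).

Record mult_hyperring : Prop := {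
  mh_nonempty : forall a b, exists z, mul a b z;
  mh_assoc : forall a b c,
      hseteq (hsetmul (hsingle a) (mul b c)) (hsetmul (mul a b) (hsingle c));
  mh_distl : forall a b c,
      hsubset (mul a (b + c)) (hsetadd (mul a b) (mul a c));
  mh_distr : forall a b c,
      hsubset (mul (b + c) a) (hsetadd (mul b a) (mul c a));
  mh_oppr : forall a b, hseteq (mul a (- b)) (hsetopp (mul a b));
  mh_oppl : forall a b, hseteq (mul (- a) b) (hsetopp (mul a b))
}.

Definition hcommutative : Prop := forall a b, hseteq (mul a b) (mul b a).
Definition has_identity : Prop := exists one : R, forall a, mul one a a.

Definition hyperideal (I : hset) : Prop :=
  (exists x, I x) /\
  (forall x y, I x -> I y -> I (x - y)) /\
  (forall r x, I x -> hsubset (mul r x) I).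

(* finite product r o r1 o ... o rn (left-associated; n+1 factors) *)
Fixpoint hprod (A : hset) (rs : seq R) : hset :=
  match rs with
  | [::] => A
  | s :: rs' => hprod (hsetmul A (hsingle s)) rs'
  end.
Definition finite_product (r : R) (rs : seq R) : hset := hprod (hsingle r) rs.

Definition C_hyperideal (I : hset) : Prop :=
  hyperideal I /\
  forall r rs, (exists z, finite_product r rs z /\ I z) ->
               hsubset (finite_product r rs) I.

Definition all_hyperideals_C : Prop :=
  forall I, hyperideal I -> C_hyperideal I.

Definition prime_hyperideal (P : hset) : Prop :=
  hyperideal P /\ (exists x, ~ P x) /\
  forall x y, hsubset (mul x y) P -> P x \/ P y.

(* intersection of all prime hyperideals containing I (= R if none) *)
Definition prime_radical (I : hset) : hset :=
  fun x => forall P, prime_hyperideal P -> hsubset I P -> P x.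

Definition good_endomorphism (alpha : R -> R) : Prop :=
  (forall x y, alpha (x + y) = alpha x + alpha y) /\
  (forall x y, hseteq (fun z => exists w, mul x y w /\ alpha w = z)
                      (mul (alpha x) (alpha y))).

Definition alpha_prime (alpha : R -> R) (I : hset) : Prop :=
  hyperideal I /\
  forall x y, hsubset (mul x y) I -> I x \/ I (alpha y).
End Hyper.

(* Pick w in x o y. As w lies in every prime hyperideal containing I, a
   Krull-type separation argument (Zorn's lemma on the hyperideals that contain I
   and avoid all products of copies of w) shows that some such product s lies
   in I. Commutativity and associativity rewrite s as an element of a o b with a
   a product of copies of x and b one of copies of y; the C-property gives
   a o b included in I, hence a in I or alpha b in I. Finally alpha b is a
   product of copies of alpha y, and a prime hyperideal containing a product of
   copies of an element contains the element itself. *)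

From mathcomp Require Import all_boot all_algebra.
From mathcomp Require Import boolp classical_sets.
Import GRing.Theory.
Set Implicit Arguments. Unset Strict Implicit.
Local Open Scope classical_set_scope.

Lemma Zorn_bigcup_nonempty (T : Type) (P : set (set T)) (A0 : set T) :
  P A0 ->
  (forall F : set (set T), F `<=` P -> total_on F subset -> F !=set0 ->
     P (\bigcup_(X in F) X)) ->
  exists A, P A /\ forall B, A `<` B -> ~ P B.
Proof.
move=> PA0 chainP.
have [A [PA Amax]] : exists A, (P `|` [set set0]) A /\
    forall B, A `<` B -> ~ (P `|` [set set0]) B.
  apply: Zorn_bigcup => F FP Ftot.
  (* set0 is adjoined to P only to cover the empty chain. *)
  have bigcupF : \bigcup_(X in F) X = \bigcup_(X in F `&` P) X.
    apply/seteqP; split=> x [X FX Xx]; last by exists X => //; case: FX.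
    exists X => //; split=> //.
    by case: (FP X FX) => // /= X0; rewrite X0 in Xx.
  rewrite bigcupF; have [FPn0|noP] := pselect ((F `&` P) !=set0).
  - left; apply: chainP FPn0; first by move=> Y [].
    by move=> Y Z [FY _] [FZ _]; exact: Ftot.
  - right; apply/seteqP; split=> x //; case=> X FPX _.
    by apply: noP; exists X.
exists A; split; last by move=> B AB PB; apply: (Amax B AB); left.
case: PA => // /= Aset0; rewrite Aset0 in Amax *.
have [[x A0x]|A0_empty] := pselect (A0 !=set0).
  exfalso; apply: (Amax A0); last by left.
  by split=> // /(_ x A0x).
suff <- : A0 = set0 by [].
by apply/seteqP; split=> x // A0x; apply: A0_empty; exists x.
Qed.

Section Hyperideals.
Variables (R : zmodType) (mul : R -> R -> hset R).

Lemma hyperideal0 (J : hset R) : hyperideal mul J -> J 0%R.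
Proof. by move=> [[x Jx] [JB _]]; rewrite -(subrr x); exact: JB. Qed.

Lemma hyperidealN (J : hset R) x : hyperideal mul J -> J x -> J (- x)%R.
Proof.
by move=> HJ Jx; rewrite -sub0r; apply: (proj1 (proj2 HJ)) => //; exact: hyperideal0.
Qed.

Lemma hyperidealD (J : hset R) x y :
  hyperideal mul J -> J x -> J y -> J (x + y)%R.
Proof.
move=> HJ Jx Jy; rewrite -[y]opprK.
by apply: (proj1 (proj2 HJ)) => //; exact: hyperidealN.
Qed.

Lemma hyperideal_mulr (J : hset R) r x w :
  hyperideal mul J -> J x -> mul r x w -> J w.
Proof. by move=> [_ [_ JM]] Jx; exact: JM. Qed.

Lemma C_hyperideal_mul_subset (J : hset R) a b c :
  all_hyperideals_C mul -> hyperideal mul J -> mul a b c -> J c ->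
  hsubset (mul a b) J.
Proof.
move=> allC HJ abc Jc w abw; apply: (proj2 (allC J HJ) a [:: b]).
- by exists c; split=> //; exists a, b.
- by exists a, b.
Qed.

Lemma hyperideal_bigcup_chain (F : set (hset R)) :
  F `<=` hyperideal mul -> total_on F subset -> F !=set0 ->
  hyperideal mul (\bigcup_(J in F) J).
Proof.
move=> Fhyp Ftot [J0 FJ0]; split; [|split].
- have [[x J0x] _] := Fhyp J0 FJ0; by exists x, J0.
- move=> x y [J1 FJ1 J1x] [J2 FJ2 J2y].
  have [J12|J21] := Ftot J1 J2 FJ1 FJ2.
  + exists J2 => //; apply: (proj1 (proj2 (Fhyp J2 FJ2))) => //; exact: J12.
  + exists J1 => //; apply: (proj1 (proj2 (Fhyp J1 FJ1))) => //; exact: J21.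
- move=> r x [J FJ Jx] w rxw; exists J => //.
  exact: hyperideal_mulr (Fhyp J FJ) Jx rxw.
Qed.

End Hyperideals.

Section Powers.
Variables (R : zmodType) (mul : R -> R -> hset R).

(* The elements of all products z o ... o z, in any bracketing: the paper's z^n. *)
Inductive hpowers (z : R) : hset R :=
| hpowers_base : hpowers z z
| hpowers_mul a b c : hpowers z a -> hpowers z b -> mul a b c -> hpowers z c.

Lemma prime_hyperideal_hpowers (P : hset R) z s :
  all_hyperideals_C mul -> prime_hyperideal mul P -> hpowers z s -> P s -> P z.
Proof.
move=> allC [HP [_ Pprime]]; elim=> // a b c _ IHa _ IHb abc Pc.
by case: (Pprime a b (C_hyperideal_mul_subset allC HP abc Pc)).
Qed.

Lemma good_endomorphism_hpowers alpha z s :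
  good_endomorphism mul alpha -> hpowers z s -> hpowers (alpha z) (alpha s).
Proof.
move=> [_ alphaM]; elim=> [|a b c _ IHa _ IHb abc]; first exact: hpowers_base.
by apply: (hpowers_mul IHa IHb); apply/alphaM; exists c.
Qed.

Hypothesis mulR : mult_hyperring mul.

Lemma mul_assocLR a b c f s :
  mul a b f -> mul f c s -> exists2 v, mul b c v & mul a v s.
Proof.
move=> abf fcs; have [a' [v [-> [bcv avs]]]] := proj2 (mh_assoc mulR a b c s)
  (ex_intro _ f (ex_intro _ c (conj abf (conj erefl fcs)))).
by exists v.
Qed.

Lemma mul_assocRL a b c v s :
  mul b c v -> mul a v s -> exists2 f, mul a b f & mul f c s.
Proof.
move=> bcv avs; have [f [c' [abf [-> fcs]]]] := proj1 (mh_assoc mulR a b c s)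
  (ex_intro _ a (ex_intro _ v (conj erefl (conj bcv avs)))).
by exists f.
Qed.

Hypothesis mulC : hcommutative mul.

Lemma hpowers_mul_split x y w s : mul x y w -> hpowers w s ->
  exists a b, [/\ hpowers x a, hpowers y b & mul a b s].
Proof.
move=> xyw; elim=> [|t u s' _ [a1 [b1 [xa1 yb1 a1b1t]]] _ [a2 [b2 [xa2 yb2 a2b2u]]] tus].
  by exists x, y; split=> //; exact: hpowers_base.
have [v b1uv a1vs] := mul_assocLR a1b1t tus.
have [e b2b1e a2ev] : exists2 e, mul b2 b1 e & mul a2 e v.
  by apply: mul_assocLR a2b2u _; apply/mulC.
have [f a1a2f fes] := mul_assocRL a2ev a1vs.
exists f, e; split=> //; first exact: hpowers_mul xa1 xa2 a1a2f.
by apply: hpowers_mul yb1 yb2 _; apply/mulC.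
Qed.

End Powers.

Section Separation.
Variables (R : zmodType) (mul : R -> R -> hset R).
Hypotheses (mulR : mult_hyperring mul) (mulC : hcommutative mul).

Definition hcolon (P : hset R) (c : R) : hset R := fun r => hsubset (mul r c) P.

Lemma hcolon_sup (P : hset R) c : hyperideal mul P -> hsubset P (hcolon P c).
Proof. by move=> HP r Pr w /mulC rcw; exact: hyperideal_mulr HP Pr rcw. Qed.

Lemma hcolon_hyperideal (P : hset R) c :
  hyperideal mul P -> hyperideal mul (hcolon P c).
Proof.
move=> HP; split; [|split].
- have [[x Px] _] := HP; exists x; exact: hcolon_sup.
- move=> r s Pr Ps w /(mh_distr mulR) [p [u [rcp [scu ->]]]].
  apply: (hyperidealD HP (Pr p rcp)); rewrite -[u]opprK.
  by apply: (hyperidealN HP (Ps _ _)); apply/(mh_oppl mulR).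
- move=> t r Pr w trw v wcv.
  have [u rcu tuv] := mul_assocLR mulR trw wcv.
  exact: hyperideal_mulr HP (Pr u rcu) tuv.
Qed.

Variables (I : hset R) (z : R).

Definition avoids_hpowers (J : hset R) : Prop :=
  [/\ hyperideal mul J, hsubset I J & forall s, hpowers mul z s -> ~ J s].

Lemma avoids_hpowers_bigcup_chain (F : set (hset R)) :
  F `<=` avoids_hpowers -> total_on F subset -> F !=set0 ->
  avoids_hpowers (\bigcup_(J in F) J).
Proof.
move=> Favoid Ftot [J0 FJ0]; split.
- apply: hyperideal_bigcup_chain Ftot _; last by exists J0.
  by move=> J /Favoid [].
- by move=> x Ix; exists J0 => //; have [_ IJ0 _] := Favoid J0 FJ0; exact: IJ0.
- by move=> s zs [J FJ Js]; have [_ _ Jnz] := Favoid J FJ; exact: Jnz zs Js.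
Qed.

Section MaximalAvoiding.
Variable A : hset R.
Hypotheses (Aavoid : avoids_hpowers A)
  (Amax : forall B, A `<` B -> ~ avoids_hpowers B).

Lemma maximal_avoids_hcolon c d : ~ A d -> hsubset (mul d c) A ->
  exists2 s, hpowers mul z s & hsubset (mul s c) A.
Proof.
have [HA IA Anz] := Aavoid => nAd dcA.
have Aproper : A `<` hcolon A c.
  by split; [exact: hcolon_sup | move/(_ d dcA)].
apply: (contra_notP _ (Amax Aproper)) => noPow.
split; [exact: hcolon_hyperideal | by move=> r /IA; exact: hcolon_sup |].
by move=> s zs scA; apply: noPow; exists s.
Qed.

Lemma maximal_avoids_prime : prime_hyperideal mul A.
Proof.
have [HA _ Anz] := Aavoid; split=> //; split.
  by exists z; apply: Anz; exact: hpowers_base.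
move=> x y xyA.
apply: (contra_notP _ (Anz _ (hpowers_base mul z))) => /not_orP [nAx nAy].
have [s zs sxA] : exists2 s, hpowers mul z s & hsubset (mul s x) A.
  by apply: maximal_avoids_hcolon nAy _ => w /mulC; exact: xyA.
have [t zt tsA] : exists2 t, hpowers mul z t & hsubset (mul t s) A.
  by apply: maximal_avoids_hcolon nAx _ => w /mulC; exact: sxA.
have [v tsv] := mh_nonempty mulR t s.
by exfalso; apply: Anz (hpowers_mul zt zs tsv) (tsA v tsv).
Qed.

End MaximalAvoiding.

Lemma prime_avoiding_hpowers : hyperideal mul I ->
  (forall s, hpowers mul z s -> ~ I s) ->
  exists P, [/\ prime_hyperideal mul P, hsubset I P & ~ P z].
Proof.
move=> HI Inz.
have [A [Aavoid Amax]] := Zorn_bigcup_nonempty (A0 := I)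
  (And3 HI (fun _ => id) Inz) avoids_hpowers_bigcup_chain.
exists A; split; first exact: maximal_avoids_prime.
- by case: Aavoid.
- by case: Aavoid => _ _; apply; exact: hpowers_base.
Qed.

End Separation.

Section PrimeRadical.
Variables (R : zmodType) (mul : R -> R -> hset R) (I : hset R).

Lemma prime_radical_hyperideal : hyperideal mul (prime_radical mul I).
Proof.
split; [|split].
- by exists 0%R => P [HP _] _; exact: hyperideal0 HP.
- move=> x y Rx Ry P PP IP; have [[_ [HPB _]] _] := PP.
  by apply: HPB; [exact: Rx | exact: Ry].
- move=> r x Rx w rxw P PP IP; have [HP _] := PP.
  exact: hyperideal_mulr HP (Rx P PP IP) rxw.
Qed.

Lemma prime_radical_hpowers w :
  mult_hyperring mul -> hcommutative mul -> hyperideal mul I ->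
  prime_radical mul I w -> exists2 s, hpowers mul w s & I s.
Proof.
move=> mulR mulC HI Rw; apply: contrapT => noPow.
have [P [PP IP nPw]] := prime_avoiding_hpowers mulR mulC HI
  (fun s ws Is => noPow (ex_intro2 _ _ s ws Is)).
exact: nPw (Rw P PP IP).
Qed.

Lemma prime_radical_of_hpowers x a : all_hyperideals_C mul ->
  hpowers mul x a -> I a -> prime_radical mul I x.
Proof.
by move=> allC xa Ia P PP IP; exact: prime_hyperideal_hpowers allC PP xa (IP a Ia).
Qed.

End PrimeRadical.

Theorem mainTheorem4 (R : zmodType) (mul : R -> R -> hset R)
    (alpha : R -> R) (I : hset R) :
  mult_hyperring mul -> hcommutative mul -> has_identity mul ->
  all_hyperideals_C mul ->
  good_endomorphism mul alpha ->
  alpha_prime mul alpha I ->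
  alpha_prime mul alpha (prime_radical mul I).
Proof.
move=> mulR mulC _ allC alphaG [HI Ialpha].
split=> [|x y xyRI]; first exact: prime_radical_hyperideal.
have [w xyw] := mh_nonempty mulR x y.
have [s ws Is] := prime_radical_hpowers mulR mulC HI (xyRI w xyw).
have [a [b [xa yb abs]]] := hpowers_mul_split mulR mulC xyw ws.
case: (Ialpha a b (C_hyperideal_mul_subset allC HI abs Is)) => [Ia | Ialphab].
  by left; exact: prime_radical_of_hpowers allC xa Ia.
right; apply: prime_radical_of_hpowers allC _ Ialphab.
exact: good_endomorphism_hpowers alphaG yb.
Qed.
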